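(* Let $n>2$ and let $\mathcal{L}\subseteq\mathcal{L}_n$ be a linear subspace that is a Jordan algebra and is invariant under the conjugation action of $S_n$, and suppose $\mathcal{L}$ contains $J$ and contains at least one $S_n$-submodule isomorphic to $\{n-1,1\}$. Then exactly one of the following holds: (1) $\mathrm{EI}_n\subseteq\mathcal{L}$ and $\mathrm{Symm}_n\not\subseteq\mathcal{L}$; (2) $\mathrm{Symm}_n\subseteq\mathcal{L}$ and $\mathrm{EI}_n\not\subseteq\mathcal{L}$; (3) $\mathrm{EI}_n+\mathrm{Symm}_n\subseteq\mathcal{L}$.
   Context: $\mathbf{1}\in\mathbb{R}^n$ is the all-ones column vector; $\mathcal{L}_n=\{Q\in \mathrm{Mat}_n(\mathbb{R}): Q\mathbf{1}=0\}$; $J:=\frac1n\mathbf{1}\mathbf{1}^T-I_n$. $R_i\in\mathcal{L}_n$ has off-diagonal entries in column $i$ equal to $1$, other off-diagonal entries $0$, diagonal fixed by zero row sums; $\mathrm{EI}_n:=\operatorname{span}_{\mathbb{R}}(R_1,\dots,R_n)$. $\mathrm{Symm}_n$ is the space of symmetric matrices in $\mathcal{L}_n$ (equivalently $\operatorname{span}_{\mathbb{R}}(L_{ij}+L_{ji}: i\ne j)$, where $L_{ij}$ has $1$ at $(i,j)$, $-1$ at $(i,i)$, zeros elsewhere). For $\sigma\in S_n$, $K_\sigma$ is the permutation matrix with $e_iK_\sigma=e_{\sigma(i)}$, and $S_n$ acts by $\sigma\cdot X=K_\sigma^TXK_\sigma$. $\{n-1,1\}$ is the irreducible real $S_n$-module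 labelled by the partition $(n-1,1)$ (the standard representation). A Jordan algebra is a subspace closed under $AB+BA$. *)

From HB Require Import structures.
From mathcomp Require Import all_boot all_order all_algebra all_fingroup.
From mathcomp Require Import reals.
Set Implicit Arguments. Unset Strict Implicit. Unset Printing Implicit Defensive.
Import Order.TTheory GRing.Theory Num.Theory.
Local Open Scope ring_scope.

Section Defs.
Variable R : realType.
Variable n : nat.

Definition ones : 'cV[R]_n := const_mx 1.

Definition inLn (Q : 'M[R]_n) : Prop := Q *m ones = 0.

Definition Jmx : 'M[R]_n := \matrix_(i, j) ((n%:R)^-1 - (i == j)%:R).

(* keep the off-diagonal entries of M, fix the diagonal by zero row sums *)
Definition zrs (M : 'M[R]_n) : 'M[R]_n :=
  \matrix_(k, j) (if k == j then - \sum_(l < n | l != k) M k l else M k j).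

Definition Rmx (i : 'I_n) : 'M[R]_n := zrs (\matrix_(k, j) (j == i)%:R).

Definition Lmx (i j : 'I_n) : 'M[R]_n := zrs (delta_mx i j).

Definition EI : {vspace 'M[R]_n} := <<[seq Rmx i | i <- enum 'I_n]>>%VS.

Definition Symm : {vspace 'M[R]_n} :=
  <<[seq (Lmx p.1 p.2 + Lmx p.2 p.1)%R
      | p <- [seq (i, j) | i <- enum 'I_n, j <- enum 'I_n] & p.1 != p.2]>>%VS.

(* permutation matrix K_s : e_i K_s = e_{s i}; perm_mx s i j = (s i == j) *)
Definition Kmx (s : 'S_n) : 'M[R]_n := perm_mx s.

Definition act (s : 'S_n) (X : 'M[R]_n) : 'M[R]_n := (Kmx s)^T *m X *m Kmx s.

(* the standard module {n-1,1}: sum-zero row vectors, s . v = v K_s *)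
Definition in_std (v : 'rV[R]_n) : Prop := \sum_i v 0 i = 0.
Definition act_std (s : 'S_n) (v : 'rV[R]_n) : 'rV[R]_n := v *m Kmx s.

Definition Sn_invariant (W : {vspace 'M[R]_n}) : Prop :=
  forall (s : 'S_n) X, X \in W -> act s X \in W.

Definition jordan (W : {vspace 'M[R]_n}) : Prop :=
  forall A B, A \in W -> B \in W -> A *m B + B *m A \in W.

Definition iso_std (W : {vspace 'M[R]_n}) : Prop :=
  Sn_invariant W /\
  exists f : {linear 'M[R]_n -> 'rV[R]_n},
    [/\ (forall X, X \in W -> f X = 0 -> X = 0),
        (forall v, in_std v <-> exists2 X, X \in W & f X = v) &
        (forall s X, X \in W -> f (act s X) = act_std s (f X))].

End Defs.

From Pilot Require Import Defs.
From HB Require Import structures.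
From mathcomp Require Import all_boot all_order all_algebra all_fingroup.
From mathcomp Require Import reals.
From mathcomp Require Import ring.
Set Implicit Arguments. Unset Strict Implicit. Unset Printing Implicit Defensive.
Import Order.TTheory GRing.Theory Num.Theory.
Local Open Scope ring_scope.

(* We show that L contains
   EI_n or Symm_n; the "exactly one of (1), (2), (3)" form of the theorem is
   then pure propositional logic, since (3) says that both are contained.

   Take the vector u = n e_0 - 1 of {n-1,1}: it is fixed by the stabiliser of
   the point 0, and its S_n-orbit sums to zero.  Its preimage w in W inherits
   both properties, so w is determined by five numbers a, b, c, d, e (its
   entries at (0,0), (1,1), (0,1), (1,0), (1,2)).  Zero row sums and the orbit
   relation tie these together, and:
   - if c <> d, the Jordan product of w with J is a multiple of the matrix
     all of whose rows are n e_0 - 1, which together with J yields R_0;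
   - if c = d, then w is a combination of J and the "star" matrix at 0, whose
     Jordan products yield every L_ij + L_ji.
   In both cases S_n-invariance spreads the single generator to all of EI_n,
   respectively Symm_n. *)

Section Sums.
Variables (R : comPzRingType) (n : nat).

Lemma sum_const_ord (x : R) : \sum_(l < n) x = x * n%:R.
Proof. by rewrite sumr_const card_ord mulr_natr. Qed.

Lemma sum_indicator (k : 'I_n) (g : 'I_n -> R) : \sum_l (l == k)%:R * g l = g k.
Proof.
rewrite (bigD1 k) //= eqxx mul1r big1 ?addr0 // => l /negbTE ->.
by rewrite mul0r.
Qed.

Lemma sum_indicator_ne (a k : 'I_n) (x : R) :
  \sum_(l < n | l != a) (l == k)%:R * x = (1 - (a == k)%:R) * x.
Proof.
have := sum_indicator k (fun _ => x); rewrite (bigD1 a) //= => H.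
by apply: (addrI ((a == k)%:R * x)); rewrite H; ring.
Qed.

Lemma sum_single (k : 'I_n) (h : 'I_n -> R) :
  (forall l, l != k -> h l = 0) -> \sum_l h l = h k.
Proof. by move=> H; rewrite (bigD1 k) //= big1 ?addr0. Qed.

Lemma sum_if1 (k : 'I_n) (x y : R) :
  \sum_l (if l == k then x else y) = x + y * (n%:R - 1).
Proof.
transitivity (\sum_l ((l == k)%:R * (x - y) + y)).
  by apply: eq_bigr => l _; case: (l == k); rewrite ?mul1r ?mul0r; ring.
by rewrite big_split /= sum_indicator sum_const_ord; ring.
Qed.

Lemma sum_if2 (k1 k2 : 'I_n) (x y z : R) : k1 != k2 ->
  \sum_l (if l == k1 then x else if l == k2 then y else z)
   = x + y + z * (n%:R - 2).
Proof.
move=> k12.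
transitivity (\sum_l ((l == k1)%:R * (x - z) + ((l == k2)%:R * (y - z) + z))).
  apply: eq_bigr => l _; case: (eqVneq l k1) => [->|_].
    by rewrite (negbTE k12) /=; ring.
  by case: (l == k2); rewrite /=; ring.
by rewrite !big_split /= !sum_indicator sum_const_ord; ring.
Qed.

End Sums.

Lemma natr_andb (R : pzSemiRingType) (b1 b2 : bool) :
  (b1 && b2)%:R = b1%:R * b2%:R :> R.
Proof. by case: b1; case: b2; rewrite /= ?mul1r ?mul0r. Qed.

Section StarMatrices.
Variables (R : comPzRingType) (n : nat).
Local Notation M := 'M[R]_n.

(* row_ones k has row k equal to 1 and col_ones k has column k equal to 1.
   The star matrix at k is the sum of L_kj + L_jk over all j <> k: it has
   1 - n at (k,k), 1 on the rest of row and column k, -1 on the rest of the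
   diagonal. *)
Definition row_ones (k : 'I_n) : M := \matrix_(a, b) (a == k)%:R.
Definition col_ones (k : 'I_n) : M := \matrix_(a, b) (b == k)%:R.

Definition star (k : 'I_n) : M :=
  row_ones k + col_ones k - 1%:M - n%:R *: delta_mx k k.

(* Entrywise evaluation of a product whose inner sum has a single nonzero
   term, the one of index k. *)
Ltac entry_at k :=
  apply/matrixP=> a b; rewrite !mxE (@sum_single _ _ k);
  [ rewrite !mxE ?eqxx /=
  | move=> l; rewrite !mxE => /negbTE ->; rewrite /= ?mul0r ?mulr0 ?andbF //].

Section ProductTable.
Variables i j : 'I_n.
Hypothesis ij : i != j.
Local Ltac solve_entry k :=
  entry_at k; rewrite ?(negbTE ij) /= ?andbT ?andbF ?natr_andb; ring.

Lemma row_ones_row_ones : row_ones i *m row_ones j = row_ones i.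
Proof. by solve_entry j. Qed.
Lemma row_ones_col_ones : row_ones i *m col_ones j = n%:R *: delta_mx i j.
Proof.
apply/matrixP=> a b; rewrite !mxE; under eq_bigr do rewrite !mxE.
by rewrite sum_const_ord natr_andb; ring.
Qed.
Lemma row_ones_delta : row_ones i *m delta_mx j j = delta_mx i j.
Proof. by solve_entry j. Qed.
Lemma col_ones_row_ones : col_ones i *m row_ones j = 0.
Proof. by solve_entry i. Qed.
Lemma col_ones_col_ones : col_ones i *m col_ones j = col_ones j.
Proof. by solve_entry i. Qed.
Lemma col_ones_delta : col_ones i *m delta_mx j j = 0.
Proof. by solve_entry i. Qed.
Lemma delta_row_ones : delta_mx i i *m row_ones j = 0.
Proof. by solve_entry i. Qed.
Lemma delta_col_ones : delta_mx i i *m col_ones j = delta_mx i j.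
Proof. by solve_entry i. Qed.
Lemma delta_delta : delta_mx i i *m delta_mx j j = 0 :> M.
Proof. by rewrite mul_delta_mx_cond (negbTE ij) mulr0n. Qed.

End ProductTable.

Lemma star_jordan i j : i != j ->
  star i *m star j + star j *m star i + star i + star j
  = n%:R *: (delta_mx i i + delta_mx j j - delta_mx i j - delta_mx j i).
Proof.
move=> ij; have ji : j != i by rewrite eq_sym.
rewrite /star !(mulmxDl, mulmxDr, mulmxN, mulNmx, mul1mx, mulmx1).
rewrite -?scalemxAl -?scalemxAr -?scalemxAl.
rewrite !(row_ones_row_ones, row_ones_col_ones, row_ones_delta).
rewrite !(col_ones_col_ones, delta_col_ones).
rewrite !(col_ones_row_ones, col_ones_delta, delta_row_ones, delta_delta) //.
by apply/matrixP=> a b; rewrite !mxE; ring.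
Qed.

End StarMatrices.

Section ActionFacts.
Variables (R : realType) (n : nat).
Local Notation M := 'M[R]_n.

Lemma actE (s : 'S_n) (X : M) i j : Defs.act s X i j = X (s^-1 i)%g (s^-1 j)%g.
Proof.
rewrite /Defs.act /Kmx tr_perm_mx -row_permE.
have -> : perm_mx s = perm_mx (s^-1)^-1 :> M by rewrite invgK.
by rewrite -col_permE !mxE.
Qed.

Lemma act_stdE (s : 'S_n) (v : 'rV[R]_n) i j : act_std s v i j = v i (s^-1 j)%g.
Proof.
rewrite /act_std /Kmx.
have -> : perm_mx s = perm_mx (s^-1)^-1 :> M by rewrite invgK.
by rewrite -col_permE mxE.
Qed.

Lemma permV_eq (s : 'S_n) (a k : 'I_n) : ((s^-1)%g a == k) = (a == s k).
Proof. by rewrite -(inj_eq (@perm_inj _ s)) permKV. Qed.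

Lemma tperm_eq_left (x k b : 'I_n) : (tperm x k b == x) = (b == k).
Proof. by rewrite -[X in _ == X](tpermR x k) (inj_eq perm_inj). Qed.

Lemma act_star (s : 'S_n) (k : 'I_n) : Defs.act s (star R k) = star R (s k).
Proof.
by apply/matrixP=> a b; rewrite actE !mxE !permV_eq permKV.
Qed.

Lemma RmxE (k : 'I_n) : Rmx R k = col_ones R k - 1%:M.
Proof.
apply/matrixP=> a b; rewrite /Rmx /zrs !mxE.
case: (eqVneq a b) => [<-|ab] /=; last by rewrite subr0.
under eq_bigr do rewrite mxE -[(_ == k)%:R]mulr1.
by rewrite sum_indicator_ne; ring.
Qed.

Lemma act_Rmx (s : 'S_n) (k : 'I_n) : Defs.act s (Rmx R k) = Rmx R (s k).
Proof.
by apply/matrixP=> a b; rewrite actE !RmxE !mxE !permV_eq permKV.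
Qed.

Lemma LmxE (i j : 'I_n) : i != j -> Lmx R i j = delta_mx i j - delta_mx i i.
Proof.
move=> ij; apply/matrixP=> a b; rewrite /Lmx /zrs !mxE.
case: (eqVneq a b) => [<-|ab].
  under eq_bigr do rewrite mxE natr_andb mulrC.
  rewrite sum_indicator_ne !natr_andb.
  by case: (a == i); case: (a == j); rewrite /=; ring.
rewrite !natr_andb; case: (eqVneq a i) => [ai|nai]; last by rewrite /=; ring.
by rewrite -ai (eq_sym b a) (negbTE ab) /=; ring.
Qed.

Lemma Lmx_sym_star (i j : 'I_n) : i != j ->
  Lmx R i j + Lmx R j i = (- n%:R^-1) *:
    (star R i *m star R j + star R j *m star R i + star R i + star R j).
Proof.
move=> ij; have ji : j != i by rewrite eq_sym.
have n_gt0 : (0 < n)%N by case: n i {ij ji j} => [[]|].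
rewrite star_jordan // !LmxE //.
by apply/matrixP=> x y; rewrite !mxE; field; rewrite pnatr_eq0 -lt0n.
Qed.

Lemma EI_from_Rmx (L : {vspace M}) (i : 'I_n) :
  Sn_invariant L -> Rmx R i \in L -> (EI R n <= L)%VS.
Proof.
move=> invL RiL; apply/span_subvP => X /mapP [k _ ->].
by rewrite -(tpermL i k) -act_Rmx invL.
Qed.

Lemma Symm_from_star (L : {vspace M}) (i : 'I_n) :
  jordan L -> Sn_invariant L -> star R i \in L -> (Symm R n <= L)%VS.
Proof.
move=> jorL invL SiL.
have starL k : star R k \in L by rewrite -(tpermL i k) -act_star invL.
apply/span_subvP => X /mapP [[p q]].
rewrite mem_filter /= => /andP [pq _] ->.
rewrite Lmx_sym_star //; apply: memvZ.
by apply: memvD; [apply: memvD; [apply: jorL|]|]; apply: starL.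
Qed.

Lemma row_sums_zero (Q : M) (i : 'I_n) : inLn Q -> \sum_l Q i l = 0.
Proof.
move=> /(congr1 (fun C : 'cV[R]_n => C i ord0)).
by rewrite !mxE; under eq_bigr do rewrite mxE mulr1.
Qed.

Lemma jordan_Jmx (w : M) (p q : 'I_n) : inLn w ->
  (Jmx R n *m w + w *m Jmx R n + 2%:R *: w) p q = n%:R^-1 * \sum_l w l q.
Proof.
move=> wLn.
have Jw : (Jmx R n *m w) p q = n%:R^-1 * \sum_l w l q - w p q.
  rewrite !mxE mulr_sumr -(sum_indicator p (fun l => w l q)) -sumrB.
  by apply: eq_bigr => l _; rewrite mxE eq_sym; ring.
have wJ : (w *m Jmx R n) p q = - w p q.
  transitivity (n%:R^-1 * \sum_l w p l - \sum_l (l == q)%:R * w p l).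
    rewrite !mxE mulr_sumr -sumrB.
    by apply: eq_bigr => l _; rewrite mxE; ring.
  by rewrite row_sums_zero // sum_indicator; ring.
have -> : (Jmx R n *m w + w *m Jmx R n + 2%:R *: w) p q
    = (Jmx R n *m w) p q + (w *m Jmx R n) p q + 2%:R * w p q by rewrite !mxE.
by rewrite Jw wJ; ring.
Qed.

End ActionFacts.

(* From here on n = m + 3, so that the three points 0, 1, 2 exist. *)
Section ThreePoints.
Variables (R : realType) (m : nat).
Local Notation n := m.+3.
Local Notation M := 'M[R]_n.

Let o0 : 'I_n := ord0.
Let o1 : 'I_n := @Ordinal n 1 isT.
Let o2 : 'I_n := @Ordinal n 2 isT.

Lemma natr_n_neq0 : n%:R != 0 :> R. Proof. by rewrite pnatr_eq0. Qed.
Lemma natr_n1_neq0 : n%:R - 1 != 0 :> R.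
Proof. by rewrite -natr1 addrK pnatr_eq0. Qed.
Lemma natr_n2_neq0 : n%:R - 2 != 0 :> R.
Proof. by rewrite -natrB // pnatr_eq0. Qed.

(* Matrices fixed by the stabiliser of the point 0 are determined by the five
   entries of stabmx: the stabiliser has five orbits on pairs of indices. *)
Definition fixed_by_stab0 (X : M) : Prop :=
  forall s : 'S_n, s o0 = o0 -> Defs.act s X = X.

Definition stabmx (a b c d e : R) : M := \matrix_(i, j)
  if i == o0 then (if j == o0 then a else c)
  else if j == o0 then d else if i == j then b else e.

Lemma stab0_form (w : M) : fixed_by_stab0 w ->
  w = stabmx (w o0 o0) (w o1 o1) (w o0 o1) (w o1 o0) (w o1 o2).
Proof.
move=> fixw.
have t0 x y : x != o0 -> y != o0 -> tperm x y o0 = o0.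
  by move=> x0 y0; rewrite tpermD // eq_sym.
have wt x y : x != o0 -> y != o0 -> forall i j,
    w (tperm x y i) (tperm x y j) = w i j.
  by move=> x0 y0 i j; rewrite -{2}(fixw _ (t0 x y x0 y0)) actE tpermV.
have o10 : o1 != o0 by []; have o20 : o2 != o0 by []; have o21 : o2 != o1 by [].
apply/matrixP=> i j; rewrite mxE.
case: (eqVneq i o0) => [->|i0]; case: (eqVneq j o0) => [->|j0] //=.
- by rewrite -(wt o1 j o10 j0 o0 o1) t0 ?tpermL.
- by rewrite -(wt o1 i o10 i0 o1 o0) t0 ?tpermL.
case: (eqVneq i j) => [<-|ij]; first by rewrite -(wt o1 i o10 i0 o1 o1) tpermL.
case: (eqVneq j o1) => [j1|j1].
  rewrite j1 in ij *.
  have E1 := wt o1 o2 o10 o20 o1 o2; rewrite tpermL tpermR in E1.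
  have E2 := wt o2 i o20 i0 o2 o1; rewrite tpermL (tpermD o21 ij) in E2.
  by rewrite E2 E1.
have E3 := wt o1 i o10 i0 o1 j; rewrite tpermL (tpermD _ ij) 1?eq_sym // in E3.
have E4 := wt o2 j o20 j0 o1 o2; rewrite tpermL (tpermD _ j1) 1?eq_sym // in E4.
by rewrite E3 E4.
Qed.

(* The preimage in a copy W of {n-1,1} of the vector n e_0 - 1 is nonzero,
   fixed by the stabiliser of 0, and its orbit under the transpositions
   (0 k) sums to zero. *)
Lemma std_preimage (W : {vspace M}) : iso_std W ->
  exists2 w, w \in W &
    [/\ w != 0, fixed_by_stab0 w & \sum_k Defs.act (tperm o0 k) w = 0].
Proof.
move=> [invW [f [finj fsurj feqv]]].
pose u : 'rV[R]_n := \row_j (if j == o0 then n%:R - 1 else -1).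
have u_std : in_std u.
  by rewrite /in_std; under eq_bigr do rewrite mxE; rewrite sum_if1; ring.
have [w wW fw] := (fsurj u).1 u_std.
exists w => //; split.
- apply/eqP=> w0; have := congr1 (fun v : 'rV[R]_n => v 0 o0) fw.
  rewrite w0 linear0 !mxE eqxx => /eqP.
  by rewrite eq_sym (negbTE natr_n1_neq0).
- move=> s s0; apply/eqP; rewrite -subr_eq0; apply/eqP; apply: finj.
    by rewrite memvB // invW.
  rewrite linearB /= feqv // fw; apply/eqP; rewrite subr_eq0; apply/eqP.
  by apply/matrixP=> x y; rewrite act_stdE !mxE permV_eq s0.
- apply: finj; first by apply: memv_suml => k _; apply: invW.
  rewrite linear_sum /=; under eq_bigr do rewrite feqv // fw.
  apply/matrixP=> x y; rewrite summxE mxE.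
  under eq_bigr do rewrite act_stdE tpermV mxE tperm_eq_left eq_sym.
  by rewrite sum_if1; ring.
Qed.

Section StabParameters.
Variables a b c d e : R.
Local Notation w := (stabmx a b c d e).
Hypothesis w_Ln : inLn w.

Lemma stabmx_row_sums : a = - (c * (n%:R - 1)) /\ d + b + e * (n%:R - 2) = 0.
Proof.
have o01 : o0 != o1 by [].
split.
- apply/eqP; rewrite -subr_eq0 opprK -(row_sums_zero o0 w_Ln) -(sum_if1 o0).
  by apply/eqP; apply: eq_bigr => l _; rewrite mxE eqxx.
- rewrite -(row_sums_zero o1 w_Ln) -(sum_if2 _ _ _ o01).
  by apply: eq_bigr => l _; rewrite mxE (eq_sym o1 o0) (negbTE o01) (eq_sym o1 l).
Qed.

Lemma stabmx_col_sums (q : 'I_n) :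
  \sum_l w l q = if q == o0 then (d - c) * (n%:R - 1) else c - d.
Proof.
have [ea r1] := stabmx_row_sums.
case: (eqVneq q o0) => [->|q0].
  rewrite (eq_bigr (fun l => if l == o0 then a else d)) ?sum_if1 ?ea; first by ring.
  by move=> l _; rewrite mxE eqxx.
rewrite (eq_bigr (fun l => if l == o0 then c else if l == q then b else e)).
  by rewrite sum_if2 1?eq_sym //; apply/eqP; rewrite -subr_eq0 -r1; apply/eqP; ring.
by move=> l _; rewrite mxE (negbTE q0).
Qed.

(* The (0,0) entry of the orbit sum is a + (n-1) b. *)
Lemma stabmx_trace :
  \sum_k Defs.act (tperm o0 k) w = 0 -> a + b * (n%:R - 1) = 0.
Proof.
move=> /(congr1 (fun X : M => X o0 o0)); rewrite summxE mxE => <-.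
rewrite -(sum_if1 o0); apply: eq_bigr => k _.
by rewrite actE tpermV tpermL mxE eqxx; case: (k == o0).
Qed.

Lemma Rmx_from_stabmx : c != d ->
  Rmx R o0 = (d - c)^-1 *: (Jmx R n *m w + w *m Jmx R n + 2%:R *: w) + Jmx R n.
Proof.
move=> cd; have dc0 : d - c != 0 by rewrite subr_eq0 eq_sym.
have n0 := natr_n_neq0.
apply/matrixP=> x y; rewrite RmxE [RHS]mxE [in RHS]mxE jordan_Jmx //.
rewrite stabmx_col_sums !mxE; move: (n%:R : R) n0 => N n0.
by case: (y == o0); rewrite /=; field; rewrite n0 dc0.
Qed.

(* Case c = d: then b = c and e = -2c/(n-2), and c <> 0 as w <> 0, so the
   star at 0 is a combination of w and J. *)
Lemma star_from_stabmx : a + b * (n%:R - 1) = 0 -> c = d -> w != 0 ->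
  star R o0 = ((n%:R - 2) / (n%:R * c)) *: w + 2%:R *: Jmx R n.
Proof.
move=> tr cd w0; have [ea r1] := stabmx_row_sums.
have n0 := natr_n_neq0; have n1 := natr_n1_neq0; have n2 := natr_n2_neq0.
have eb : b = c by apply: (mulIf n1); apply: (addrI a); rewrite tr {1}ea; ring.
have ee : e = - (2%:R * c) / (n%:R - 2).
  by apply: (mulIf n2); rewrite divfK //; apply: (addrI (d + b)); rewrite r1 eb -cd; ring.
have c0 : c != 0.
  apply: contraNneq w0 => c0; apply/eqP/matrixP => i j; rewrite !mxE ea eb ee -cd c0.
  by case: (i == o0); case: (j == o0); case: (i == j); rewrite /=; ring.
apply/matrixP => i j; rewrite !mxE ea eb ee -cd.
move: (n%:R : R) n0 n2 => N n0 n2.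
case: (eqVneq i o0) => [->|i0].
  by rewrite (eq_sym o0 j); case: (j == o0); rewrite /=; field; rewrite n0 c0.
case: (eqVneq i j) => [<-|ij]; rewrite ?(negbTE i0) ?(negbTE ij) /=.
  by field; rewrite n0 c0.
by case: (j == o0); rewrite /=; field; rewrite n0 ?n2 c0.
Qed.

End StabParameters.

Lemma EI_or_Symm (L : {vspace M}) :
  (forall Q, Q \in L -> inLn Q) -> jordan L -> Sn_invariant L ->
  Jmx R n \in L -> (exists W : {vspace M}, (W <= L)%VS /\ iso_std W) ->
  (EI R n <= L)%VS \/ (Symm R n <= L)%VS.
Proof.
move=> LnL jorL invL JL [W [WL stdW]].
have [w wW [w0 fixw orbit0]] := std_preimage stdW.
have wL : w \in L := subvP WL _ wW.
have wLn := LnL w wL.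
move: wL w0 orbit0 wLn; rewrite (stab0_form fixw).
move: (w o0 o0) (w o1 o1) (w o0 o1) (w o1 o0) (w o1 o2) => a b c d e wL w0 orbit0 wLn.
case: (eqVneq c d) => [cd|cd].
- right; apply: (Symm_from_star (i := o0) jorL invL).
  rewrite (star_from_stabmx wLn (stabmx_trace orbit0) cd w0).
  by apply: memvD; apply: memvZ.
- left; apply: (EI_from_Rmx (i := o0) invL).
  rewrite (Rmx_from_stabmx wLn cd); apply: memvD => //; apply: memvZ.
  by apply: memvD; [apply: jorL | apply: memvZ].
Qed.

End ThreePoints.

Theorem mainTheorem14 (R : realType) (n : nat) (L : {vspace 'M[R]_n}) :
  (2 < n)%N ->
  (forall Q, Q \in L -> inLn Q) ->
  jordan L ->
  Sn_invariant L ->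
  Jmx R n \in L ->
  (exists W : {vspace 'M[R]_n}, (W <= L)%VS /\ iso_std W) ->
  let c1 := (EI R n <= L)%VS /\ ~ (Symm R n <= L)%VS in
  let c2 := (Symm R n <= L)%VS /\ ~ (EI R n <= L)%VS in
  let c3 := (EI R n + Symm R n <= L)%VS in
  [/\ c1 \/ c2 \/ c3, ~ (c1 /\ c2), ~ (c1 /\ c3) & ~ (c2 /\ c3)].
Proof.
case: n L => [|[|[|m]]] // L _ LnL jorL invL JL stdL c1 c2 c3.
have := EI_or_Symm LnL jorL invL JL stdL.
rewrite {}/c1 {}/c2 {}/c3 subv_add.
case: (EI R _ <= L)%VS; case: (Symm R _ <= L)%VS => /= EIorSymm;
  by split; move: EIorSymm; rewrite /is_true; intuition congruence.
Qed.
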